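(* Let $M$ and $M'$ be as described in the context, with the same initial-state distribution $\rho$ on $S$ and horizon $T$. For every policy $\pi'=(\pi'_1,\dots,\pi'_n)$ on $M'$, \[ V'_{\pi'}(\rho) = V_{\phi(\pi')}(\rho). \]
   Context: Fix integers $n\ge 1$ (agents/radars), $m\ge 1$ (targets), a horizon $T\ge 1$, and write $[m]=\{1,\dots,m\}$ and $\dagger$ for an extra ''stop'' symbol not in $[m]$. Let $S$ be a finite state space, $\Omega_1,\dots,\Omega_n$ finite individual observation sets, $O(\omega\mid s)$ a probability distribution on $\Omega_1\times\dots\times\Omega_n$ for each $s\in S$, $P(s,\varepsilon,\cdot)$ a probability distribution on $S$ for each $s\in S$ and joint action $\varepsilon=(\varepsilon_1,\dots,\varepsilon_n)\in\mathcal P([m])^n$, and $R:S\times\mathcal P([m])^n\times S\to\mathbb R$ a reward function. The original Dec-POMDP $M$: agent $j$'s action is a subset $\varepsilon_j\subseteq[m]$ (the set of targets it tracks). A policy on $M$ is $\pi=(\pi_1,\dots,\pi_n)$ with each $\pi_j(\cdot\mid\omega_j)$ a probability distribution on $\mathcal P([m])$ for each $\omega_j\in\Omega_j$. Dynamics: $s_0\sim\rho$; at each step $t=0,\dots,T-1$, an observation $\omega_t=(\omega_{t,1},\dots,\omega_{t,n})\sim O(\cdot\mid s_t)$ is drawn, each agent independently draws $\varepsilon_{t,j}\sim\pi_j(\cdot\mid\omega_{t,j})$, then $s_{t+1}\sim P(s_t,\varepsilon_t,\cdot)$ and reward $R(s_t,\varepsilon_t,s_{t+1})$ is received. $V_\pi(\rho)=\mathbb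 E\big[\sum_{t=0}^{T-1}R(s_t,\varepsilon_t,s_{t+1})\big]$. The sequential-choice Dec-POMDP $M'$: its states are pairs $s\otimes\varepsilon$ of an underlying state $s\in S$ and a tuple of partial selections $\varepsilon=(\varepsilon_1,\dots,\varepsilon_n)$, $\varepsilon_j\subseteq[m]$, together with a flag per agent saying whether it has finished. A policy on $M'$ is $\pi'=(\pi'_1,\dots,\pi'_n)$ where, for each $\omega_j\in\Omega_j$ and $E\subseteq[m]$, $\pi'_j(\cdot\mid\omega_j,E)$ is a probability distribution on $([m]\setminus E)\cup\{\dagger\}$. Dynamics: $s_0\sim\rho$; each round $t=0,\dots,T-1$ proceeds as follows. An observation $\omega_t\sim O(\cdot\mid s_t)$ is drawn and stays fixed during the round; all $\varepsilon_j$ start at $\varnothing$ and no agent is finished. At each micro-step, every unfinished agent $j$ independently draws $a_j\sim\pi'_j(\cdot\mid\omega_{t,j},\varepsilon_j)$; if $a_j\in[m]$ then $\varepsilon_j\leftarrow\varepsilon_j\cup\{a_j\}$, and if $a_j=\dagger$ agent $j$ becomes finished; the underlying state does not change and reward $0$ is received. (Since chosen targets cannot be rechosen, each agent finishes after at most $m+1$ micro-steps.) When all agents are finished with selections $\varepsilon=(\varepsilon_1,\dots,\varepsilon_n)$, the underlying state moves to $s_{t+1}\sim P(s_t,\varepsilon,\cdot)$, reward $R(s_t,\varepsilon,s_{t+1})$ is received, and the selections are reset to $\varnothing$. $V'_{\pi'}(\rho)$ is the expected total reward received over the $T$ rounds. Policy transposition: for a policy $\pi'$ on $M'$, $\phi(\pi')$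 is the policy on $M$ with, for each agent $j$, $\omega\in\Omega_j$ and $\varepsilon\subseteq[m]$ with $|\varepsilon|=p$, \[\phi_j(\pi')(\varepsilon\mid\omega)=\sum_{(i_1,\dots,i_p)}\Big(\prod_{l=0}^{p-1}\pi'_j\big(i_{l+1}\mid\omega,\{i_1,\dots,i_l\}\big)\Big)\,\pi'_j(\dagger\mid\omega,\varepsilon),\] where the sum ranges over all $p!$ orderings $(i_1,\dots,i_p)$ of the elements of $\varepsilon$ (for $\varepsilon=\varnothing$ this is $\pi'_j(\dagger\mid\omega,\varnothing)$). *)

From HB Require Import structures.
From mathcomp Require Import all_boot all_order all_algebra.
Set Implicit Arguments. Unset Strict Implicit. Unset Printing Implicit Defensive.
Import Order.TTheory GRing.Theory Num.Theory.
Local Open Scope ring_scope.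

Definition is_distr (R : realFieldType) (T : finType) (f : T -> R) : Prop :=
  (forall x, 0 <= f x) /\ \sum_(x : T) f x = 1.

Section DecPOMDP.
Variable R : realFieldType.
Variables (n m : nat) (S : finType) (Omega : 'I_n -> finType).

Definition jobs := {dffun forall j : 'I_n, Omega j}.
Definition jact := {ffun 'I_n -> {set 'I_m}}.

Variables (O : S -> jobs -> R) (P : S -> jact -> S -> R) (Rw : S -> jact -> S -> R).

(* pi j w e = pi_j(e | w) *)
Definition policyM := forall j : 'I_n, Omega j -> {set 'I_m} -> R.

Definition joint_act_prob (pi : policyM) (w : jobs) (e : jact) : R :=
  \prod_(j < n) pi j (w j) (e j).

Fixpoint VM_togo (pi : policyM) (t : nat) (s : S) : R :=
  match t with
  | 0 => 0
  | t'.+1 => \sum_(w : jobs) O s w *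
             \sum_(e : jact) joint_act_prob pi w e *
             \sum_(s' : S) P s e s' * (Rw s e s' + VM_togo pi t' s')
  end.

Definition VM (pi : policyM) (T : nat) (rho : S -> R) : R :=
  \sum_(s : S) rho s * VM_togo pi T s.

(* pi' j w E a = pi'_j(a | w, E); a = Some i is target i, a = None is the stop symbol dagger *)
Definition policyM' := forall j : 'I_n, Omega j -> {set 'I_m} -> option 'I_m -> R.

(* per-agent partial selection together with its "finished" flag *)
Definition config := {ffun 'I_n -> {set 'I_m} * bool}.

Definition upd (E : {set 'I_m}) (a : option 'I_m) : {set 'I_m} * bool :=
  match a with Some i => (i |: E, false) | None => (E, true) end.

Definition agent_step (pi' : policyM') (j : 'I_n) (wj : Omega j)
    (c c' : {set 'I_m} * bool) : R :=
  if c.2 then (c' == c)%:R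
  else \sum_(a : option 'I_m) pi' j wj c.1 a * (c' == upd c.1 a)%:R.

Definition micro_step (pi' : policyM') (w : jobs) (c c' : config) : R :=
  \prod_(j < n) agent_step pi' (w j) (c j) (c' j).

Definition all_fin (c : config) : bool := [forall j, (c j).2].
Definition sel (c : config) : jact := [ffun j => (c j).1].
Definition init_cfg : config := [ffun _ => (set0, false)].

(* Expected value of the rest of a round (observation w fixed), starting from
   configuration c, with k micro-steps of fuel (m+1 always suffice); once all
   agents are finished with selections e, the value [cont e] is collected. *)
Fixpoint round_value (pi' : policyM') (cont : jact -> R) (w : jobs)
    (k : nat) (c : config) : R :=
  if all_fin c then cont (sel c)
  else match k with
       | 0 => 0
       | k'.+1 => \sum_(c' : config) micro_step pi' w c c' * round_value pi' cont w k' c'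
       end.

Fixpoint VM'_togo (pi' : policyM') (t : nat) (s : S) : R :=
  match t with
  | 0 => 0
  | t'.+1 => \sum_(w : jobs) O s w *
             round_value pi'
               (fun e => \sum_(s' : S) P s e s' * (Rw s e s' + VM'_togo pi' t' s'))
               w m.+1 init_cfg
  end.

Definition VM' (pi' : policyM') (T : nat) (rho : S -> R) : R :=
  \sum_(s : S) rho s * VM'_togo pi' T s.

Fixpoint ord_prob (pi' : policyM') (j : 'I_n) (wj : Omega j)
    (pre : {set 'I_m}) (s : seq 'I_m) : R :=
  match s with
  | [::] => 1
  | i :: s' => pi' j wj pre (Some i) * ord_prob pi' wj (i |: pre) s'
  end.

Definition phi (pi' : policyM') : policyM :=
  fun j wj e =>
    (\sum_(s <- permutations (enum e)) ord_prob pi' wj set0 s) * pi' j wj e None.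

Definition is_policyM' (pi' : policyM') : Prop :=
  forall (j : 'I_n) (wj : Omega j) (E : {set 'I_m}),
    is_distr (pi' j wj E) /\ (forall i, i \in E -> pi' j wj E (Some i) = 0).

End DecPOMDP.

From mathcomp Require Import all_boot all_order all_algebra.
Import Order.TTheory GRing.Theory Num.Theory.
Local Open Scope ring_scope.

(* The two value functions have the same recursion over
   rounds, so everything reduces to a single round with a fixed observation w:
   the value of a round of M' from the initial configuration must equal the
   expectation of the continuation under the joint action law of phi(pi'). *)

Lemma sum_option (V : nmodType) (T : finType) (F : option T -> V) :
  \sum_(a : option T) F a = F None + \sum_(i : T) F (Some i).
Proof.
transitivity (\sum_(a <- None :: map Some (index_enum T)) F a).
  apply/perm_big/uniq_perm; first exact: index_enum_uniq.
  - rewrite /= map_inj_uniq ?index_enum_uniq; last exact: Some_inj.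
    by rewrite andbT; apply/mapP => -[].
  - by case=> [x|]; rewrite !mem_index_enum ?inE //= (mem_map Some_inj) mem_index_enum.
by rewrite big_cons big_map.
Qed.

Section SequentialChoice.
Variables (R : realFieldType) (n m : nat) (Omega : 'I_n -> finType)
  (pi' : policyM' R m Omega).

Lemma agent_step_finished j (wj : Omega j) E (f : {set 'I_m} * bool -> R) :
  \sum_x agent_step pi' wj (E, true) x * f x = f (E, true).
Proof.
rewrite (bigD1 (E, true)) //= /agent_step eqxx mul1r big1 ?addr0 //.
by move=> x /negbTE ->; rewrite mul0r.
Qed.

Lemma agent_step_active j (wj : Omega j) E (f : {set 'I_m} * bool -> R) :
  \sum_x agent_step pi' wj (E, false) x * f x =
  \sum_(a : option 'I_m) pi' j wj E a * f (upd E a).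
Proof.
rewrite /agent_step /=; under eq_bigr do rewrite mulr_suml.
rewrite exchange_big /=; apply: eq_bigr => a _.
rewrite (bigD1 (upd E a)) //= eqxx mulr1 big1 ?addr0 // => x /negbTE ->.
by rewrite mulr0 mul0r.
Qed.

Fixpoint final_law (j : 'I_n) (wj : Omega j) (k : nat)
    (c : {set 'I_m} * bool) (e : {set 'I_m}) : R :=
  if c.2 then (c.1 == e)%:R
  else if k is k'.+1 then
    \sum_x agent_step pi' wj c x * final_law j wj k' x e
  else 0.
Arguments final_law [j] wj k c e.

Lemma final_law_finished j (wj : Omega j) k E e :
  final_law wj k (E, true) e = (E == e)%:R.
Proof. by case: k. Qed.

Lemma final_lawS j (wj : Omega j) k c e :
  final_law wj k.+1 c e = \sum_x agent_step pi' wj c x * final_law wj k x e.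
Proof.
by case: c => E [] //=; rewrite agent_step_finished final_law_finished.
Qed.

Lemma final_law_all_finished (cont : jact n m -> R) (w : jobs Omega) k
    (c : config n m) :
  all_fin c ->
  \sum_(e : jact n m) (\prod_(j < n) final_law (w j) k (c j) (e j)) * cont e =
  cont (sel c).
Proof.
move=> /forallP c_fin.
have final_c j e : final_law (w j) k (c j) e = (sel c j == e)%:R.
  by move: (c_fin j); rewrite ffunE; case: (c j) => E b /= ->; rewrite final_law_finished.
rewrite (bigD1 (sel c)) //= [X in _ + X]big1 => [|e e_ne].
  by rewrite addr0 big1 ?mul1r // => j _; rewrite final_c eqxx.
have [j /negbTE ne_j] : exists j, sel c j != e j.
  apply/existsP; apply: contraR e_ne => /existsPn eq_c.
  by apply/eqP/ffunP => j; apply/esym/eqP/negPn.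
by rewrite (bigD1 j) //= final_c ne_j !mul0r.
Qed.

Lemma round_valueE (cont : jact n m -> R) (w : jobs Omega) k (c : config n m) :
  round_value pi' cont w k c =
  \sum_(e : jact n m) (\prod_(j < n) final_law (w j) k (c j) (e j)) * cont e.
Proof.
elim: k c => [|k IH] c; rewrite [LHS]/=; have [c_fin|c_act] := ifPn (all_fin c).
- by rewrite final_law_all_finished.
- have [j j_act] := forallPn c_act.
  rewrite big1 // => e _; rewrite (bigD1 j) //=.
  by case: (c j) j_act => E [] //= _; rewrite !mul0r.
- by rewrite final_law_all_finished.
under eq_bigr do rewrite IH.
under [RHS]eq_bigr do under eq_bigr do rewrite final_lawS.
under [RHS]eq_bigr do rewrite bigA_distr_bigA mulr_suml.
rewrite [RHS]exchange_big /=; apply: eq_bigr => c' _.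
rewrite mulr_sumr; apply: eq_bigr => e _.
by rewrite /micro_step mulrA -big_split.
Qed.

Definition orderings_sum j (wj : Omega j) (E D : {set 'I_m}) : R :=
  \sum_(s <- permutations (enum D)) ord_prob pi' wj E s.
Arguments orderings_sum [j] wj E D.

Lemma orderings_sum0 j (wj : Omega j) E : orderings_sum wj E set0 = 1.
Proof. by rewrite /orderings_sum enum_set0 /= big_seq1. Qed.

Lemma orderings_sumE j (wj : Omega j) E D : D != set0 ->
  orderings_sum wj E D =
  \sum_(i in D) pi' j wj E (Some i) * orderings_sum wj (i |: E) (D :\ i).
Proof.
move=> D_neq0.
have enum_gt0 : (0 < size (enum D))%N.
  by rewrite -cardE card_gt0.
rewrite /orderings_sum (perm_big _ (permutationsE enum_gt0)).
rewrite big_allpairs_dep undup_id ?enum_uniq // big_enum /=.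
apply: eq_bigr => i i_D; rewrite mulr_sumr.
apply/perm_big/perm_permutations/uniq_perm; rewrite ?rem_uniq ?enum_uniq //.
by move=> x; rewrite mem_rem_uniq ?enum_uniq // !inE !mem_enum in_setD1.
Qed.

(* Closed form of the final law of an active agent, given enough fuel
   (each active step adds a new target or stops). *)
Lemma final_law_active j (wj : Omega j) k E e :
  (forall (F : {set 'I_m}) i, i \in F -> pi' j wj F (Some i) = 0) ->
  (#|~: E| < k)%N ->
  final_law wj k (E, false) e =
  (E \subset e)%:R * orderings_sum wj E (e :\: E) * pi' j wj e None.
Proof.
move=> no_repeat; elim: k E => [|k IH] E // fuel.
rewrite final_lawS agent_step_active sum_option /= final_law_finished.
(* Adding target i: impossible if i \in E, otherwise use the induction hypothesis. *)
have add_target : \sum_i pi' j wj E (Some i) * final_law wj k (i |: E, false) e =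
    \sum_(i in e :\: E) pi' j wj E (Some i) *
      ((i |: E \subset e)%:R * orderings_sum wj (i |: E) (e :\: (i |: E)) *
       pi' j wj e None).
  rewrite [RHS]big_mkcond; apply: eq_bigr => i _.
  have [i_E|i_E] := boolP (i \in E); first by rewrite in_setD i_E no_repeat // mul0r.
  have less_free : (#|~: (i |: E)| < #|~: E|)%N.
    by rewrite proper_card // properC properUr // sub1set.
  rewrite IH; last exact: leq_trans less_free fuel.
  rewrite in_setD i_E /=; case: ifP => // i_e.
  by rewrite subUset sub1set i_e /= !mul0r mulr0.
rewrite add_target; have [E_e|E_e] := boolP (E \subset e); last first.
  rewrite !mul0r big1 => [|i _]; last by rewrite subUset (negbTE E_e) andbF !mul0r mulr0.
  by case: eqP E_e => [->|_]; rewrite ?subxx ?mulr0 ?addr0.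
case: eqP => [<-|E_ne]; first by rewrite setDv big_set0 orderings_sum0 addr0 !mulr1 mul1r.
rewrite mulr0 add0r mul1r orderings_sumE; last first.
  rewrite setD_eq0; apply/negP => e_E; apply: E_ne.
  by apply/eqP; rewrite eqEsubset E_e.
rewrite mulr_suml; apply: eq_bigr => i /setDP [i_e i_E].
rewrite subUset sub1set i_e E_e /= mul1r mulrA.
by congr (_ * orderings_sum _ _ _ * _); rewrite setDDl setUC.
Qed.

Lemma round_from_init (cont : jact n m -> R) (w : jobs Omega) :
  is_policyM' pi' ->
  round_value pi' cont w m.+1 (init_cfg n m) =
  \sum_(e : jact n m) joint_act_prob (phi pi') w e * cont e.
Proof.
move=> pi'_policy; rewrite round_valueE; apply: eq_bigr => e _; congr (_ * _).
apply: eq_bigr => j _; rewrite ffunE final_law_active.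
- by rewrite sub0set setD0 mul1r.
- by move=> F i; apply: (pi'_policy j (w j) F).2.
- by rewrite setC0 cardsT card_ord.
Qed.

End SequentialChoice.

Theorem lemma1 (R : realFieldType) (n m T : nat) (S : finType)
    (Omega : 'I_n -> finType)
    (O : S -> jobs Omega -> R) (P : S -> jact n m -> S -> R)
    (Rw : S -> jact n m -> S -> R) (rho : S -> R)
    (pi' : policyM' R m Omega) :
  (1 <= n)%N -> (1 <= m)%N -> (1 <= T)%N ->
  is_distr rho ->
  (forall s, is_distr (O s)) ->
  (forall s e, is_distr (P s e)) ->
  is_policyM' pi' ->
  VM' O P Rw pi' T rho = VM O P Rw (phi pi') T rho.
Proof.
move=> _ _ _ _ _ _ pi'_policy.
rewrite /VM' /VM; apply: eq_bigr => s _; congr (_ * _).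
elim: T s => [|t IH] s //; apply: eq_bigr => w _.
rewrite round_from_init //; congr (_ * _); apply: eq_bigr => e _.
by congr (_ * _); apply: eq_bigr => s' _; congr (_ * (_ + _)); exact: IH.
Qed.
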